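(* The action of $W_d(\mathbb C)$ on $L^{(d-1)}\cap U_d(\mathbb C)$ is free.
   Context: Fix $d\ge2$. $V=\mathbb C^d\oplus\mathfrak{so}(d,\mathbb C)$, elements $(v,M)$ with $v=(c_1,\dots,c_d)^\top$, $M$ complex skew-symmetric, $M_{ij}=c_{ij}=-M_{ji}$ for $i<j$; $O_d(\mathbb C)=\{A:AA^\top=I\}$ acts by $A\cdot(v,M)=(Av,AMA^\top)$. $W_d(\mathbb C)$ is the group of diagonal matrices with entries in $\{-1,1\}$. $L^{(1)}=\{c_1=\dots=c_{d-1}=0\}$, and for $2\le i\le d-1$, $L^{(i)}=\{(v,M)\in L^{(i-1)}:c_{k(d-i+2)}=0,\ 1\le k\le d-i\}$ (so on $L^{(d-1)}$ only $c_d,c_{12},c_{23},\dots,c_{(d-1)d}$ can be nonzero). Let $f_1=c_1^2+\dots+c_d^2$; for $2\le i\le d-1$ let $f_i$ be the $O_d(\mathbb C)$-invariant rational function on $V$ with $f_i|_{L^{(i-1)}}=c_{1(d-i+2)}^2+\dots+c_{(d-i+1)(d-i+2)}^2$; let $f_d$ be the invariant rational function with $f_d|_{L^{(d-1)}}=c_{12}^2$ (these exist and are uniquely determined). $U_d(\mathbb C)$ is the set of points in the domain of every $f_k$ with $\prod_kf_k\neq0$. A group action is free if every stabilizer is trivial. *)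

(* Complex numbers are modelled as R[i] (mathcomp-real-closed
   'complex') over an arbitrary R : realType (i.e. the real numbers). *)
From HB Require Import structures.
From mathcomp Require Import all_boot all_order all_algebra.
From mathcomp Require Import complex.
From mathcomp Require Import reals.
Set Implicit Arguments. Unset Strict Implicit. Unset Printing Implicit Defensive.
Import Order.TTheory GRing.Theory Num.Theory.
Local Open Scope ring_scope.

(* Points (v, M) of C^d (+) so(d,C): pairs of a column vector and a matrix;
   the ambient space V is the set of pairs whose matrix is skew-symmetric. *)
Definition pt (C : fieldType) (d : nat) := ('cV[C]_d * 'M[C]_d)%type.

Definition inV (C : fieldType) (d : nat) (x : pt C d) : Prop := x.2^T = - x.2.

(* 1-based coordinates: cv x i = c_i,  cm x i j = c_ij (entry (i,j) of M);
   out-of-range indices give 0 (never used in range-guarded statements). *)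
Definition cv (C : fieldType) (d : nat) (x : pt C d) (i : nat) : C :=
  match (insub i.-1 : option 'I_d) with Some a => x.1 a ord0 | None => 0 end.
Definition cm (C : fieldType) (d : nat) (x : pt C d) (i j : nat) : C :=
  match (insub i.-1 : option 'I_d), (insub j.-1 : option 'I_d) with
  | Some a, Some b => x.2 a b | _, _ => 0 end.

Definition act (C : fieldType) (d : nat) (A : 'M[C]_d) (x : pt C d) : pt C d :=
  (A *m x.1, A *m x.2 *m A^T).

Definition orthogonal (C : fieldType) (d : nat) (A : 'M[C]_d) : Prop :=
  A *m A^T = 1%:M.

Definition inW (C : fieldType) (d : nat) (A : 'M[C]_d) : Prop :=
  (forall i j : 'I_d, i != j -> A i j = 0) /\
  (forall i : 'I_d, A i i = 1 \/ A i i = -1).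

Inductive polyfun (C : fieldType) (d : nat) : (pt C d -> C) -> Prop :=
| pf_const (c : C) : polyfun (fun _ => c)
| pf_vcoord (i : 'I_d) : polyfun (fun x => x.1 i ord0)
| pf_mcoord (i j : 'I_d) : polyfun (fun x => x.2 i j)
| pf_add f g : polyfun f -> polyfun g -> polyfun (fun x => f x + g x)
| pf_mul f g : polyfun f -> polyfun g -> polyfun (fun x => f x * g x).

(* rational functions on V, given by a representative fraction p/q *)
Definition ratf (C : fieldType) (d : nat) := ((pt C d -> C) * (pt C d -> C))%type.

Definition ratf_valid (C : fieldType) (d : nat) (r : ratf C d) : Prop :=
  [/\ polyfun r.1, polyfun r.2 & exists x, inV x /\ r.2 x <> 0].

Definition ratf_eq (C : fieldType) (d : nat) (r s : ratf C d) : Prop :=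
  forall x, inV x -> r.1 x * s.2 x = s.1 x * r.2 x.

Definition ratf_val (C : fieldType) (d : nat) (r : ratf C d) (x : pt C d) (y : C)
  : Prop :=
  inV x /\ exists s, [/\ ratf_valid s, ratf_eq r s, s.2 x <> 0 & y = s.1 x / s.2 x].

Definition in_dom (C : fieldType) (d : nat) (r : ratf C d) (x : pt C d) : Prop :=
  exists y, ratf_val r x y.

Definition O_invariant (C : fieldType) (d : nat) (r : ratf C d) : Prop :=
  forall A : 'M[C]_d, orthogonal A ->
    forall x, inV x -> r.1 (act A x) * r.2 x = r.1 x * r.2 (act A x).

Definition restricts_to (C : fieldType) (d : nat) (r : ratf C d)
  (L : pt C d -> Prop) (g : pt C d -> C) : Prop :=
  exists s, [/\ ratf_valid s, ratf_eq r s, (exists x0, L x0 /\ s.2 x0 <> 0)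
              & forall x, L x -> s.1 x = g x * s.2 x].

Fixpoint Lsub (C : fieldType) (d : nat) (i : nat) (x : pt C d) : Prop :=
  match i with
  | 0 => inV x
  | S i' =>
    match i' with
    | 0 => inV x /\ (forall j, (1 <= j <= d - 1)%N -> cv x j = 0)
    | S _ => Lsub i' x /\
             (forall k, (1 <= k <= d - i)%N -> cm x k (d - i + 2) = 0)
    end
  end.

(* the prescribed restrictions of f_i:
   f_1 = c_1^2 + ... + c_d^2 (on L^(0) = V);
   f_i|L^(i-1) = c_{1(d-i+2)}^2 + ... + c_{(d-i+1)(d-i+2)}^2  (2 <= i <= d-1);
   f_d|L^(d-1) = c_12^2. *)
Definition ftarget (C : fieldType) (d : nat) (i : nat) (x : pt C d) : C :=
  if i == 1%N then \sum_(1 <= j < d.+1) cv x j ^+ 2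
  else if i == d then cm x 1 2 ^+ 2
  else \sum_(1 <= k < (d - i + 1).+1) cm x k (d - i + 2) ^+ 2.

Definition is_f_family (C : fieldType) (d : nat) (f : nat -> ratf C d) : Prop :=
  forall i, (1 <= i <= d)%N ->
    [/\ ratf_valid (f i), O_invariant (f i) & restricts_to (f i) (Lsub i.-1) (ftarget i)].

Definition inU (C : fieldType) (d : nat) (f : nat -> ratf C d) (x : pt C d) : Prop :=
  inV x /\ exists ys : nat -> C,
    (forall k, (1 <= k <= d)%N -> ratf_val (f k) x (ys k)) /\
    \prod_(1 <= k < d.+1) ys k <> 0.

(* On L^(d-1) the prescribed restrictions give f_1 = c_d^2 and
   f_k = c_{(d-k+1)(d-k+2)}^2 for k >= 2, so a point of L^(d-1) in U_d has
   c_d <> 0 and c_{j(j+1)} <> 0 for all j < d.  If diag(e_1, ..., e_d) fixes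
   it, then e_d c_d = c_d and e_j e_{j+1} c_{j(j+1)} = c_{j(j+1)}, so e_d = 1
   and then e_j = 1 for j = d-1, ..., 1.  To evaluate f_k on L^(d-1) through
   its restriction to L^(k-1) we use that affine subspaces are irreducible:
   if p q = 0 on an affine subspace on which q does not vanish identically,
   then p = 0 there, since on every line this is a product of one-variable
   polynomials. *)

From mathcomp Require Import all_boot all_order all_algebra.
From mathcomp Require Import complex.
From mathcomp Require Import reals.
From mathcomp Require Import ring zify.
Import GRing.Theory Num.Theory.
Set Implicit Arguments. Unset Strict Implicit.
Local Open Scope ring_scope.

Lemma poly_eq0_of_horner_eq0 (C : numDomainType) (p : {poly C}) :
  (forall t, p.[t] = 0) -> p = 0.
Proof.
move=> p0; apply: (@roots_geq_poly_eq0 _ _ [seq i%:R | i <- iota 0 (size p)]).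
- by apply/allP => t _; rewrite /root p0.
- by rewrite map_inj_uniq ?iota_uniq // => i j /eqP; rewrite eqr_nat => /eqP.
- by rewrite size_map size_iota.
Qed.

Section Lines.
Variables (C : numFieldType) (d : nat).
Implicit Types (a b x : pt C d) (f g p q : pt C d -> C).

Definition line a b (t : C) : pt C d :=
  (a.1 + t *: (b.1 - a.1), a.2 + t *: (b.2 - a.2)).

Lemma line0 a b : line a b 0 = a.
Proof. by rewrite /line !scale0r !addr0; case: a. Qed.

Lemma line1 a b : line a b 1 = b.
Proof. by rewrite /line !scale1r !subrKC; case: b. Qed.

Definition polynomial_along_lines f :=
  forall a b, exists p : {poly C}, forall t, f (line a b t) = p.[t].

Definition line_closed (L : pt C d -> Prop) :=
  forall a b t, L a -> L b -> L (line a b t).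

Lemma polynomial_along_lines_affine f :
  (forall a b t, f (line a b t) = f a + t * (f b - f a)) ->
  polynomial_along_lines f.
Proof.
move=> f_line a b; exists ((f a)%:P + (f b - f a)%:P * 'X) => t.
by rewrite f_line !hornerE mulrC.
Qed.

Lemma polynomial_along_lines_cst (c : C) : polynomial_along_lines (fun _ => c).
Proof. by move=> a b; exists c%:P => t; rewrite hornerC. Qed.

Lemma polynomial_along_linesD f g :
  polynomial_along_lines f -> polynomial_along_lines g ->
  polynomial_along_lines (fun x => f x + g x).
Proof.
move=> pf pg a b; have [p fp] := pf a b; have [q gq] := pg a b.
by exists (p + q) => t; rewrite hornerD fp gq.
Qed.

Lemma polynomial_along_linesB f g :
  polynomial_along_lines f -> polynomial_along_lines g ->
  polynomial_along_lines (fun x => f x - g x).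
Proof.
move=> pf pg a b; have [p fp] := pf a b; have [q gq] := pg a b.
by exists (p - q) => t; rewrite hornerD hornerN fp gq.
Qed.

Lemma polynomial_along_linesM f g :
  polynomial_along_lines f -> polynomial_along_lines g ->
  polynomial_along_lines (fun x => f x * g x).
Proof.
move=> pf pg a b; have [p fp] := pf a b; have [q gq] := pg a b.
by exists (p * q) => t; rewrite hornerM fp gq.
Qed.

Lemma polynomial_along_linesX f n :
  polynomial_along_lines f -> polynomial_along_lines (fun x => f x ^+ n).
Proof.
by move=> pf a b; have [p fp] := pf a b; exists (p ^+ n) => t; rewrite horner_exp fp.
Qed.

Lemma polynomial_along_lines_sum (I : Type) (r : seq I) (F : I -> pt C d -> C) :
  (forall i, polynomial_along_lines (F i)) ->
  polynomial_along_lines (fun x => \sum_(i <- r) F i x).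
Proof.
move=> pF a b; elim: r => [|i r [p Fp]].
  by exists 0 => t; rewrite big_nil horner0.
have [q Fq] := pF i a b.
by exists (q + p) => t; rewrite big_cons hornerD Fq Fp.
Qed.

Lemma polyfun_along_lines f : polyfun f -> polynomial_along_lines f.
Proof.
elim=> [c|i|i j|{}f g _ pf _ pg|{}f g _ pf _ pg].
- exact: polynomial_along_lines_cst.
- by apply: polynomial_along_lines_affine => a b t; rewrite !mxE.
- by apply: polynomial_along_lines_affine => a b t; rewrite !mxE.
- exact: polynomial_along_linesD.
- exact: polynomial_along_linesM.
Qed.

Lemma line_closed_mul_eq0 (L : pt C d -> Prop) p q a :
  line_closed L -> polynomial_along_lines p -> polynomial_along_lines q ->
  L a -> q a <> 0 -> (forall x, L x -> p x * q x = 0) ->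
  forall b, L b -> p b = 0.
Proof.
move=> Lline pp pq La qa0 pq0 b Lb.
have [P Pp] := pp a b; have [Q Qq] := pq a b.
have /eqP : P * Q = 0.
  by apply: poly_eq0_of_horner_eq0 => t; rewrite hornerM -Pp -Qq pq0 //; apply: Lline.
rewrite mulf_eq0 => /orP[/eqP P0 | /eqP Q0].
  by rewrite -(line1 a b) Pp P0 horner0.
by case: qa0; rewrite -(line0 a b) Qq Q0 horner0.
Qed.

Lemma inV_line_closed : line_closed (@inV C d).
Proof.
move=> a b t /matrixP Va /matrixP Vb; apply/matrixP => i j.
by move: (Va i j) (Vb i j); rewrite /line !mxE => -> ->; ring.
Qed.

Lemma ratf_eq_sym (r s : ratf C d) : ratf_eq r s -> ratf_eq s r.
Proof. by move=> rs x Vx; rewrite rs. Qed.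

Lemma ratf_eq_trans (r s u : ratf C d) :
  ratf_valid s -> polyfun r.1 -> polyfun r.2 -> polyfun u.1 -> polyfun u.2 ->
  ratf_eq r s -> ratf_eq s u -> ratf_eq r u.
Proof.
move=> [ps1 ps2 [z [Vz s2z]]] pr1 pr2 pu1 pu2 rs su x Vx.
have pcross : polynomial_along_lines (fun w => r.1 w * u.2 w - u.1 w * r.2 w).
  by apply: polynomial_along_linesB; apply: polynomial_along_linesM;
    exact: polyfun_along_lines.
apply/eqP; rewrite -subr_eq0; apply/eqP.
apply: (line_closed_mul_eq0 (@inV_line_closed) pcross (polyfun_along_lines ps2) Vz s2z _ Vx).
move=> w Vw.
have -> : (r.1 w * u.2 w - u.1 w * r.2 w) * s.2 w =
          (r.1 w * s.2 w) * u.2 w - (u.1 w * s.2 w) * r.2 w by ring.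
by rewrite rs // -su //; ring.
Qed.

Lemma ratf_val_restricts_to (r : ratf C d) (L : pt C d -> Prop) g x y :
  ratf_valid r -> line_closed L -> (forall z, L z -> inV z) ->
  restricts_to r L g -> polynomial_along_lines g ->
  L x -> ratf_val r x y -> y = g x.
Proof.
move=> [pr1 pr2 r_nz] Lline LV [s [[ps1 ps2 _] rs [x0 [Lx0 s2x0]] sg]] pg Lx.
move=> [Vx [s' [[ps1' ps2' _] rs' s'2x ->]]].
have ss' : ratf_eq s s'.
  exact: (ratf_eq_trans (And3 pr1 pr2 r_nz) ps1 ps2 ps1' ps2' (ratf_eq_sym rs) rs').
have gs' : forall z, L z -> g z * s'.2 z - s'.1 z = 0.
  apply: (line_closed_mul_eq0 Lline _ (polyfun_along_lines ps2) Lx0 s2x0).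
    by apply: polynomial_along_linesB; [apply: polynomial_along_linesM => //|];
      exact: polyfun_along_lines.
  move=> z Lz; have := ss' z (LV z Lz); rewrite sg // => e.
  by rewrite mulrBl mulrAC e subrr.
have /eqP := gs' x Lx; rewrite subr_eq0 => /eqP <-.
by rewrite mulfK //; apply/eqP.
Qed.

End Lines.

Section Subspaces.
Variables (C : numFieldType) (d : nat).
Implicit Types (a b x : pt C d).

Lemma cv_line a b t j : cv (line a b t) j = cv a j + t * (cv b j - cv a j).
Proof.
rewrite /cv; case: (insub j.-1 : option 'I_d) => [k|]; last by ring.
by rewrite /line !mxE.
Qed.

Lemma cm_line a b t i j : cm (line a b t) i j = cm a i j + t * (cm b i j - cm a i j).
Proof.
rewrite /cm; case: (insub i.-1 : option 'I_d) => [k|]; last by ring.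
case: (insub j.-1 : option 'I_d) => [l|]; last by ring.
by rewrite /line !mxE.
Qed.

Lemma cv_ord x (i : 'I_d) : cv x i.+1 = x.1 i ord0.
Proof. by rewrite /cv /= valK. Qed.

Lemma cm_ord x (i j : 'I_d) : cm x i.+1 j.+1 = x.2 i j.
Proof. by rewrite /cm /= !valK. Qed.

Lemma ftarget_along_lines k : polynomial_along_lines (@ftarget C d k).
Proof.
have pcv j : polynomial_along_lines (fun x : pt C d => cv x j ^+ 2).
  by apply/polynomial_along_linesX/polynomial_along_lines_affine => a b t; rewrite cv_line.
have pcm i j : polynomial_along_lines (fun x : pt C d => cm x i j ^+ 2).
  by apply/polynomial_along_linesX/polynomial_along_lines_affine => a b t; rewrite cm_line.
rewrite /ftarget; case: (k == 1%N); first exact: polynomial_along_lines_sum.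
by case: (k == d); last exact: polynomial_along_lines_sum.
Qed.

Lemma Lsub_line_closed k : line_closed (@Lsub C d k).
Proof.
elim: k => [|[|k] IHk]; first exact: inV_line_closed.
  move=> a b t [Va a0] [Vb b0]; split; first exact: inV_line_closed.
  by move=> j hj; rewrite cv_line a0 // b0 //; ring.
move=> a b t [La a0] [Lb b0]; split; first exact: IHk.
by move=> j hj; rewrite cm_line a0 // b0 //; ring.
Qed.

Lemma LsubS k x : Lsub k.+1 x -> Lsub k x.
Proof. by case: k => [[]|k []]. Qed.

Lemma Lsub_le k l x : (k <= l)%N -> Lsub l x -> Lsub k x.
Proof.
move=> /subnK <-; elim: (l - k)%N => [|n IHn] // Lx.
by apply/IHn/LsubS; rewrite -addSn.
Qed.

Lemma Lsub_inV k x : Lsub k x -> inV x.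
Proof. exact: (Lsub_le (leq0n k)). Qed.

End Subspaces.

Section LastSubspace.
Variables (C : numFieldType) (d : nat) (f : nat -> ratf C d).
Hypotheses (d_ge2 : (2 <= d)%N) (f_family : is_f_family f).
Variable x : pt C d.
Hypothesis Lx : Lsub d.-1 x.

Lemma ftarget1_Lsub : ftarget 1 x = cv x d ^+ 2.
Proof.
have [_ cv0] : Lsub 1 x by apply: Lsub_le Lx; lia.
rewrite /ftarget eqxx big_nat_recr 1?ltnW //= big1_seq ?add0r // => j.
by rewrite mem_index_iota => /andP[_ /andP[j1 jd]]; rewrite cv0 ?expr2 ?mul0r //; lia.
Qed.

Lemma ftarget_Lsub k : (2 <= k <= d)%N ->
  ftarget k x = cm x (d - k + 1) (d - k + 2) ^+ 2.
Proof.
case: k => [|[|k]] // /andP[_ kd]; rewrite /ftarget /=.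
case: eqVneq => [-> | kd']; first by rewrite subnn.
have [_ cm0] : Lsub k.+2 x by apply: Lsub_le Lx; lia.
rewrite big_nat_recr 1?addn1 //= big1_seq ?add0r // => m.
by rewrite mem_index_iota => /andP[_ /andP[m1 mk]]; rewrite cm0 ?expr2 ?mul0r //; lia.
Qed.

Lemma inU_ftarget_neq0 k : inU f x -> (1 <= k <= d)%N -> ftarget k x != 0.
Proof.
move=> [_ [ys [ys_val ys_nz]]] kd; have [fk_valid _ fk_restr] := f_family kd.
have <- : ys k = ftarget k x.
  apply: (ratf_val_restricts_to fk_valid (@Lsub_line_closed _ _ _) (@Lsub_inV _ _ _)
            fk_restr (@ftarget_along_lines _ _ _) _ (ys_val k kd)).
  by apply: Lsub_le Lx; lia.
move/eqP: ys_nz; rewrite prodf_seq_neq0 => /allP/(_ k); apply.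
by rewrite mem_index_iota; lia.
Qed.

Lemma inU_cv_neq0 : inU f x -> cv x d != 0.
Proof.
move=> xU; have := @inU_ftarget_neq0 1 xU.
by rewrite ftarget1_Lsub sqrf_eq0; apply; lia.
Qed.

Lemma inU_cm_neq0 j : inU f x -> (1 <= j < d)%N -> cm x j j.+1 != 0.
Proof.
move=> xU jd; have := @inU_ftarget_neq0 (d - j + 1) xU.
rewrite ftarget_Lsub; last by lia.
have -> : (d - (d - j + 1) + 1 = j)%N by lia.
have -> : (d - (d - j + 1) + 2 = j.+1)%N by lia.
by rewrite sqrf_eq0; apply; lia.
Qed.

End LastSubspace.

Lemma diag_mx_stab_eq1 (C : idomainType) n (D : 'M[C]_n) (v : 'cV_n) (M : 'M_n) :
  is_diag_mx D -> D *m v = v -> D *m M *m D^T = M ->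
  (forall i : 'I_n, i.+1 = n -> v i ord0 != 0) ->
  (forall i j : 'I_n, j = i.+1 :> nat -> M i j != 0) ->
  D = 1%:M.
Proof.
move=> /diag_mxP[e ->] Dv DM v_nz M_nz.
rewrite mul_diag_mx in Dv; rewrite tr_diag_mx mul_diag_mx mul_mx_diag in DM.
have ev i : e 0 i * v i ord0 = v i ord0.
  by move/matrixP: Dv => /(_ i ord0); rewrite mxE.
have eM i j : e 0 i * M i j * e 0 j = M i j.
  by move/matrixP: DM => /(_ i j); rewrite !mxE.
have e1 k (i : 'I_n) : (i + k)%N = n.-1 -> e 0 i = 1.
  elim: k i => [|k IHk] i ik; have i_lt := ltn_ord i.
    by apply: (mulIf (v_nz i _)); [lia | rewrite mul1r ev].
  have i1 : (i.+1 < n)%N by lia.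
  apply: (mulIf (M_nz i (Ordinal i1) erefl)).
  by rewrite mul1r -[RHS](eM i (Ordinal i1)) (IHk (Ordinal i1)) ?mulr1 //=; lia.
apply/matrixP => i j; rewrite !mxE; case: eqVneq => [_|_]; last by rewrite mulr0n.
by rewrite mulr1n (e1 (n.-1 - i)%N) //; have := ltn_ord i; lia.
Qed.

Theorem proposition3p8 (R : realType) (d : nat) (hd : (2 <= d)%N)
  (f : nat -> ratf R[i] d) (hf : is_f_family f) :
  forall (A : 'M[R[i]]_d) (x : pt R[i] d),
    inW A -> Lsub d.-1 x -> inU f x -> act A x = x -> A = 1%:M.
Proof.
move=> A x [A_diag _] Lx xU Ax.
have [Av AM] : A *m x.1 = x.1 /\ A *m x.2 *m A^T = x.2
  by case: x Ax {Lx xU} => v M [-> ->].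
apply: (diag_mx_stab_eq1 (v := x.1) (M := x.2) _ Av AM).
- by apply/is_diag_mxP => i j; apply: A_diag.
- by move=> i iE; rewrite -cv_ord iE; exact: (inU_cv_neq0 hd hf).
- move=> i j jE; rewrite -cm_ord jE; apply: (inU_cm_neq0 hd hf) => //.
  by have := ltn_ord j; lia.
Qed.
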